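(* Let $n\ge 1$ and let $\rho_1$ be a density matrix on $n$ qubits (Hilbert space $H_1\cong(\mathbb{C}^2)^{\otimes n}$) at time $t_1$. Let $\mathcal{M}_{2|1}$ be a completely positive trace-preserving (CPTP) map from operators on $H_1$ to operators on $H_2\cong(\mathbb{C}^2)^{\otimes n}$, applied between times $t_1$ and $t_2$, with Choi–Jamiołkowski matrix $$M_{12}:=\sum_{i,j=0}^{2^n-1}\big(|i\rangle\langle j|\big)^T\otimes \mathcal{M}_{2|1}\big(|i\rangle\langle j|\big)\in\mathcal{B}(H_1\otimes H_2).$$ Let $R_{12}$ be the two-time $n$-qubit pseudo-density matrix obtained with coarse-grained measurements at $t_1$ and $t_2$ (as defined in the context). Then $$R_{12}=\tfrac12\big(M_{12}\,\rho+\rho\,M_{12}\big),\qquad \rho:=\rho_1\otimes \mathbb{1}_2 .$$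
   Context: Pauli matrices: $\sigma_0=\mathbb{1},\sigma_1,\sigma_2,\sigma_3$; an $n$-qubit Pauli matrix is an element $\tilde\sigma\in\{\sigma_0,\sigma_1,\sigma_2,\sigma_3\}^{\otimes n}$, indexed by $i\in\{0,\dots,4^n-1\}$. Coarse-grained measurement of $\tilde\sigma_{i}$ at time $t_\alpha$: the two-outcome projective measurement $\{P^\alpha_+=(\mathbb{1}+\tilde\sigma_{i})/2,\ P^\alpha_-=(\mathbb{1}-\tilde\sigma_{i})/2\}$ with outcomes $+1,-1$ respectively, and post-measurement (Lüders) update $\rho\mapsto P^\alpha_\pm\rho P^\alpha_\pm$ (unnormalized, its trace being the outcome probability). For a pair $(i_1,i_2)$, the experiment is: prepare $\rho_1$, perform the coarse-grained measurement of $\tilde\sigma_{i_1}$ at $t_1$, apply $\mathcal{M}_{2|1}$ to the post-measurement state, perform the coarse-grained measurement of $\tilde\sigma_{i_2}$ at $t_2$; $\langle\tilde\sigma_{i_1},\tilde\sigma_{i_2}\rangle$ denotes the expectation value of the product of the two $\pm1$ outcomes. The pseudo-density matrix is $$R_{12}=\frac{1}{2^{2n}}\sum_{i_1,i_2=0}^{4^n-1}\langle\tilde\sigma_{i_1},\tilde\sigma_{i_2}\rangle\,\tilde\sigma_{i_1}\otimes\tilde\sigma_{i_2}.$$ *)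

(* the complex field is an arbitrary numClosedFieldType C
   (e.g. algC, or complex R for a real closed / real field R). *)
From HB Require Import structures.
From mathcomp Require Import all_boot all_order all_algebra.
From mathcomp Require Export mxtens.
Set Implicit Arguments. Unset Strict Implicit. Unset Printing Implicit Defensive.
Import Order.TTheory GRing.Theory Num.Theory.
Local Open Scope ring_scope.

Section QDefs.
Variable C : numClosedFieldType.

Definition adjmx {m n} (A : 'M[C]_(m, n)) : 'M[C]_(n, m) := map_mx Num.conj A^T.

(* positive semidefinite: <v, A v> >= 0 for all v (over C this forces A hermitian) *)
Definition psd {d} (A : 'M[C]_d) : Prop :=
  forall v : 'cV[C]_d, 0 <= (adjmx v *m A *m v) 0 0.

Definition density {d} (rho : 'M[C]_d) : Prop := psd rho /\ \tr rho = 1.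

Definition blockmx {m d} (X : 'M[C]_(m * d)) (p q : 'I_m) : 'M[C]_d :=
  \matrix_(i, j) X (mxtens_index (p, i)) (mxtens_index (q, j)).

(* (id_m (x) Phi)(X) *)
Definition ampl {d e} m (Phi : 'M[C]_d -> 'M[C]_e) (X : 'M[C]_(m * d))
  : 'M[C]_(m * e) :=
  \matrix_(a, b) Phi (blockmx X (mxtens_unindex a).1 (mxtens_unindex b).1)
                     (mxtens_unindex a).2 (mxtens_unindex b).2.

Definition completely_positive {d e} (Phi : 'M[C]_d -> 'M[C]_e) : Prop :=
  forall m (X : 'M[C]_(m * d)), psd X -> psd (ampl Phi X).

Definition trace_preserving {d e} (Phi : 'M[C]_d -> 'M[C]_e) : Prop :=
  forall X, \tr (Phi X) = \tr X.

Definition CPTP {d e} (Phi : {linear 'M[C]_d -> 'M[C]_e}) : Prop :=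
  completely_positive Phi /\ trace_preserving Phi.

Definition sigma (k : 'I_4) : 'M[C]_2 :=
  \matrix_(a, b)
    match val k with
    | 0 => if a == b then 1 else 0
    | 1 => if a == b then 0 else 1
    | 2 => if a == b then 0 else (if val a == 0%N then - 'i else 'i)
    | _ => if a == b then (if val a == 0%N then 1 else -1) else 0
    end.

(* n-qubit Pauli matrices, indexed by i : 'I_(4^n); the index decomposes
   (via mxtens_unindex) into the single-qubit indices, first qubit first *)
Fixpoint pauli (n : nat) : 'I_(4 ^ n) -> 'M[C]_(2 ^ n) :=
  match n return 'I_(4 ^ n) -> 'M[C]_(2 ^ n) with
  | 0 => fun _ => 1%:M
  | n'.+1 => fun i =>
      let ij := @mxtens_unindex 4 (4 ^ n') (cast_ord (expnS 4 n') i) in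
      castmx (esym (expnS 2 n'), esym (expnS 2 n')) (sigma ij.1 *t @pauli n' ij.2)
  end.
Arguments pauli n i : clear implicits.

Definition sgnb (b : bool) : C := if b then 1 else -1.

(* projector onto the outcome sgnb b of the coarse-grained measurement of P *)
Definition proj {d} (P : 'M[C]_d) (b : bool) : 'M[C]_d :=
  2^-1 *: (1%:M + sgnb b *: P).

(* <sigma_{i1}, sigma_{i2}>: expectation of the product of the two outcomes;
   Prob(a,b) = Tr(P2_b Phi(P1_a rho1 P1_a) P2_b) (Lueders updates) *)
Definition corr n (rho1 : 'M[C]_(2 ^ n))
  (Phi : 'M[C]_(2 ^ n) -> 'M[C]_(2 ^ n)) (i1 i2 : 'I_(4 ^ n)) : C :=
  \sum_(a : bool) \sum_(b : bool)
    sgnb a * sgnb b *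
    \tr (proj (pauli n i2) b *m
         Phi (proj (pauli n i1) a *m rho1 *m proj (pauli n i1) a) *m
         proj (pauli n i2) b).

Definition pdm n (rho1 : 'M[C]_(2 ^ n)) (Phi : 'M[C]_(2 ^ n) -> 'M[C]_(2 ^ n))
  : 'M[C]_(2 ^ n * 2 ^ n) :=
  ((2 ^ (2 * n))%:R)^-1 *:
    \sum_(i1 < 4 ^ n) \sum_(i2 < 4 ^ n)
      corr rho1 Phi i1 i2 *: (pauli n i1 *t pauli n i2).

Definition choi {d} (Phi : 'M[C]_d -> 'M[C]_d) : 'M[C]_(d * d) :=
  \sum_(i < d) \sum_(j < d) ((delta_mx i j)^T *t Phi (delta_mx i j)).

End QDefs.

From mathcomp Require Import all_boot all_order all_algebra.
From mathcomp Require Import mxtens ring.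
Import GRing.Theory Num.Theory.
Local Open Scope ring_scope.

(* Summing the two Lüders branches of a measurement of P with their signs
   turns X into the Jordan product (P X + X P) / 2, so the correlator of the
   Pauli matrices P_i1, P_i2 is tr (P_i2 Psi (P_i1)) / 2, where
   Psi X = Phi (X rho1) + Phi (rho1 X).  The n-qubit Pauli matrices satisfy the
   completeness relation sum_k P_k(a,b) P_k = 2^n E_ba (E_ba a matrix unit); it
   inverts the Pauli expansion in the second tensor factor and identifies
   sum_k P_k (x) Psi (P_k) with 2^n times the Choi matrix of Psi.  Finally, if M
   is the Choi matrix of Phi, those of X |-> Phi (X A) and X |-> Phi (A X) are
   (A (x) 1) M and M (A (x) 1). *)

Section TensorProduct.
Context {R : comPzRingType}.

Lemma tensmxDl m n p q (A A' : 'M[R]_(m, n)) (B : 'M[R]_(p, q)) :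
  (A + A') *t B = A *t B + A' *t B.
Proof. by apply/matrixP => x y; rewrite !mxE mulrDl. Qed.

Lemma tensmxDr m n p q (A : 'M[R]_(m, n)) (B B' : 'M[R]_(p, q)) :
  A *t (B + B') = A *t B + A *t B'.
Proof. by apply/matrixP => x y; rewrite !mxE mulrDr. Qed.

Lemma tensmxZl m n p q c (A : 'M[R]_(m, n)) (B : 'M[R]_(p, q)) :
  (c *: A) *t B = c *: (A *t B).
Proof. by apply/matrixP => x y; rewrite !mxE mulrA. Qed.

Lemma tensmxZr m n p q c (A : 'M[R]_(m, n)) (B : 'M[R]_(p, q)) :
  A *t (c *: B) = c *: (A *t B).
Proof. by apply/matrixP => x y; rewrite !mxE mulrCA. Qed.

Lemma tensmx_suml m n p q I (r : seq I) (P : pred I) (F : I -> 'M[R]_(m, n))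
    (B : 'M[R]_(p, q)) :
  (\sum_(i <- r | P i) F i) *t B = \sum_(i <- r | P i) F i *t B.
Proof.
by apply: (big_morph (fun A : 'M[R]_(m, n) => A *t B)) => [A A'|];
  [exact: tensmxDl | exact: tens0mx].
Qed.

Lemma tensmx_sumr m n p q I (r : seq I) (P : pred I) (A : 'M[R]_(m, n))
    (F : I -> 'M[R]_(p, q)) :
  A *t (\sum_(i <- r | P i) F i) = \sum_(i <- r | P i) A *t F i.
Proof.
by apply: (big_morph (fun B : 'M[R]_(p, q) => A *t B)) => [B B'|];
  [exact: tensmxDr | exact: tensmx0].
Qed.

Lemma tensmx_delta m n p q (i : 'I_m) (j : 'I_n) (k : 'I_p) (l : 'I_q) :
  delta_mx i j *t delta_mx k l
  = delta_mx (mxtens_index (i, k)) (mxtens_index (j, l)) :> 'M[R]_(_, _).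
Proof.
apply/matrixP => x y.
case: (mxtens_indexP x) => x1 x2; case: (mxtens_indexP y) => y1 y2.
rewrite tensmxE !mxE !(inj_eq (can_inj (@mxtens_indexK _ _))) !xpair_eqE.
by rewrite -natrM mulnb andbACA.
Qed.

End TensorProduct.

Lemma sum_mxtens_unindex (V : nmodType) m n (F : 'I_m * 'I_n -> V) :
  \sum_(k < m * n) F (mxtens_unindex k) = \sum_i \sum_j F (i, j).
Proof.
rewrite pair_big (reindex (@mxtens_unindex m n)) //.
by exists (@mxtens_index m n) => k; rewrite (mxtens_indexK, mxtens_unindexK).
Qed.

Section CompleteFamily.
Context {R : comPzRingType}.

(* Equivalently, sum_k P k (x) P k = N * SWAP. *)
Definition complete_family {m d} (P : 'I_m -> 'M[R]_d) (N : R) : Prop :=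
  forall a b, \sum_k P k a b *: P k = N *: delta_mx b a.

Lemma complete_family_tensmx {m m' d d'}
    {P : 'I_m -> 'M[R]_d} {Q : 'I_m' -> 'M[R]_d'} {N N'} :
  complete_family P N -> complete_family Q N' ->
  complete_family (fun k => P (mxtens_unindex k).1 *t Q (mxtens_unindex k).2)
                  (N * N').
Proof.
move=> PN QN a b.
case: (mxtens_indexP a) => a1 a2; case: (mxtens_indexP b) => b1 b2.
rewrite (@sum_mxtens_unindex _ _ _
          (fun k => (P k.1 *t Q k.2) _ _ *: (P k.1 *t Q k.2))) /=.
transitivity (\sum_i \sum_j (P i a1 b1 *: P i) *t (Q j a2 b2 *: Q j)).
  apply: eq_bigr => i _; apply: eq_bigr => j _.
  by rewrite tensmxE tensmxZl tensmxZr scalerA.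
under eq_bigr do rewrite -tensmx_sumr.
by rewrite -tensmx_suml PN QN tensmxZl tensmxZr scalerA tensmx_delta.
Qed.

Lemma complete_family_castmx {m d d'} (e : d = d') {P : 'I_m -> 'M[R]_d} {N} :
  complete_family P N -> complete_family (fun k => castmx (e, e) (P k)) N.
Proof.
case: d' / e => PN a b; rewrite -PN.
by apply: eq_bigr => k _; rewrite castmx_id.
Qed.

Lemma complete_family_cast_ord {m m' d} (e : m' = m) {P : 'I_m -> 'M[R]_d} {N} :
  complete_family P N -> complete_family (fun k => P (cast_ord e k)) N.
Proof.
case: m / e in P * => PN a b; rewrite -PN.
by apply: eq_bigr => k _; rewrite cast_ord_id.
Qed.

Lemma delta_mulmx m n p (i : 'I_m) (j : 'I_n) (A : 'M[R]_(n, p)) :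
  delta_mx i j *m A = \sum_l A j l *: delta_mx i l.
Proof.
rewrite {1}(matrix_sum_delta A) mulmx_sumr (bigD1 j) //=.
rewrite [X in _ + X]big1 ?addr0.
  by rewrite mulmx_sumr; apply: eq_bigr => l _; rewrite -scalemxAr mul_delta_mx.
move=> k nkj; rewrite mulmx_sumr big1 // => l _.
by rewrite -scalemxAr mul_delta_mx_cond eq_sym (negbTE nkj) scaler0.
Qed.

Lemma mulmx_delta m n p (A : 'M[R]_(m, n)) (i : 'I_n) (j : 'I_p) :
  A *m delta_mx i j = \sum_l A l i *: delta_mx l j.
Proof.
rewrite {1}(matrix_sum_delta A) mulmx_suml; apply: eq_bigr => l _.
rewrite mulmx_suml (bigD1 i) //= [X in _ + X]big1 ?addr0.
  by rewrite -scalemxAl mul_delta_mx.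
by move=> k nki; rewrite -scalemxAl mul_delta_mx_cond (negbTE nki) scaler0.
Qed.

Lemma mxtrace_mulE m n (A : 'M[R]_(m, n)) (B : 'M[R]_(n, m)) :
  \tr (A *m B) = \sum_i \sum_j A i j * B j i.
Proof. by apply: eq_bigr => i _; rewrite mxE. Qed.

Lemma complete_family_expansion {m d} {P : 'I_m -> 'M[R]_d} {N}
    (PN : complete_family P N) (Z : 'M[R]_d) :
  \sum_k \tr (P k *m Z) *: P k = N *: Z.
Proof.
transitivity (\sum_a \sum_b Z b a *: \sum_k P k a b *: P k).
  under eq_bigr do rewrite mxtrace_mulE scaler_suml.
  rewrite exchange_big; apply: eq_bigr => a _.
  under eq_bigr do rewrite scaler_suml.
  rewrite exchange_big; apply: eq_bigr => b _.
  by rewrite scaler_sumr; apply: eq_bigr => k _; rewrite scalerA mulrC.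
rewrite [in RHS](matrix_sum_delta Z) exchange_big scaler_sumr.
apply: eq_bigr => b _.
by rewrite scaler_sumr; apply: eq_bigr => a _; rewrite PN !scalerA mulrC.
Qed.

End CompleteFamily.

Section Qubits.
Context {C : numClosedFieldType}.

Lemma sigma_complete : complete_family (sigma C) 2.
Proof.
move=> a b; apply/matrixP => c e; rewrite summxE !big_ord_recr big_ord0 /= !mxE /=.
case: a => [[|[|//]] ?]; case: b => [[|[|//]] ?];
case: c => [[|[|//]] ?]; case: e => [[|[|//]] ?] /=.
all: rewrite ?mulr0 ?mul0r ?mulr1 ?mul1r ?add0r ?addr0 ?mulrN ?mulNr ?opprK.
all: rewrite -?expr2 ?sqrCi.
all: by rewrite ?subrr ?opprK ?expr1n.
Qed.

Lemma pauli_complete n : complete_family (@pauli C n) (2 ^ n)%:R.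
Proof.
elim: n => [|n IHn].
  move=> a b; apply/matrixP => c e; rewrite big_ord1 !mxE.
  by case: a b c e => [[]//?] [[]//?] [[]//?] [[]//?].
have -> : (2 ^ n.+1)%:R = 2 * (2 ^ n)%:R :> C by rewrite expnS natrM.
exact: complete_family_castmx _
  (complete_family_cast_ord _ (complete_family_tensmx sigma_complete IHn)).
Qed.

Lemma choi_complete_family {m d} {P : 'I_m -> 'M[C]_d} {N}
    (PN : complete_family P N) (L : {linear 'M[C]_d -> 'M[C]_d}) :
  \sum_k P k *t L (P k) = N *: choi L.
Proof.
transitivity (\sum_k \sum_i \sum_j P k i j *: (P k *t L (delta_mx i j))).
  apply: eq_bigr => k _; rewrite {2}(matrix_sum_delta (P k)) linear_sum tensmx_sumr.
  apply: eq_bigr => i _; rewrite linear_sum tensmx_sumr.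
  by apply: eq_bigr => j _; rewrite linearZ tensmxZr.
rewrite exchange_big; under eq_bigr do rewrite exchange_big.
rewrite /choi scaler_sumr; apply: eq_bigr => i _.
rewrite scaler_sumr; apply: eq_bigr => j _.
under eq_bigr do rewrite -tensmxZl.
by rewrite -tensmx_suml PN trmx_delta tensmxZl.
Qed.

Lemma choiD {d} (F G : 'M[C]_d -> 'M[C]_d) : choi (F \+ G) = choi F + choi G.
Proof.
rewrite /choi -big_split; apply: eq_bigr => i _.
by rewrite -big_split; apply: eq_bigr => j _; rewrite tensmxDr.
Qed.

Lemma choi_comp_mulmxr {d} (Phi : {linear 'M[C]_d -> 'M[C]_d}) (A : 'M[C]_d) :
  choi (Phi \o mulmxr A) = (A *t 1%:M) *m choi Phi.
Proof.
rewrite /choi mulmx_sumr; apply: eq_bigr => i _; rewrite mulmx_sumr.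
transitivity (\sum_j \sum_l A j l *: (delta_mx j i *t Phi (delta_mx i l))).
  apply: eq_bigr => j _; rewrite /= trmx_delta delta_mulmx linear_sum tensmx_sumr.
  by apply: eq_bigr => l _; rewrite linearZ tensmxZr.
rewrite exchange_big; apply: eq_bigr => l _.
rewrite trmx_delta tensmx_mul mul1mx mulmx_delta tensmx_suml.
by apply: eq_bigr => j _; rewrite tensmxZl.
Qed.

Lemma choi_comp_mulmx {d} (Phi : {linear 'M[C]_d -> 'M[C]_d}) (A : 'M[C]_d) :
  choi (Phi \o mulmx A) = choi Phi *m (A *t 1%:M).
Proof.
rewrite /choi mulmx_suml.
transitivity (\sum_i \sum_j \sum_l A l i *: (delta_mx j i *t Phi (delta_mx l j))).
  apply: eq_bigr => i _; apply: eq_bigr => j _.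
  rewrite /= trmx_delta mulmx_delta linear_sum tensmx_sumr.
  by apply: eq_bigr => l _; rewrite linearZ tensmxZr.
rewrite exchange_big; under eq_bigr do rewrite exchange_big; rewrite exchange_big.
apply: eq_bigr => l _; rewrite mulmx_suml; apply: eq_bigr => j _.
rewrite trmx_delta tensmx_mul mulmx1 delta_mulmx tensmx_suml.
by apply: eq_bigr => i _; rewrite tensmxZl.
Qed.

Lemma lueders_sgn_sum {d} (P X : 'M[C]_d) :
  \sum_b sgnb C b *: (proj P b *m X *m proj P b) = 2^-1 *: (P *m X + X *m P).
Proof.
rewrite big_bool /= /proj /sgnb.
do 3 rewrite -?scalemxAl -?scalemxAr ?(mulmxDl, mulmxDr, mul1mx, mulmx1).
rewrite !(scalerDr, scalerA).
move: (P *m X *m P) (P *m X) (X *m P) => A B D.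
by apply/matrixP => i j; rewrite !mxE; field.
Qed.

Lemma lueders_sgn_trace {d} (P X : 'M[C]_d) :
  \sum_b sgnb C b * \tr (proj P b *m X *m proj P b) = \tr (P *m X).
Proof.
transitivity (\tr (\sum_b sgnb C b *: (proj P b *m X *m proj P b))).
  by rewrite raddf_sum; apply: eq_bigr => b _; rewrite /= mxtraceZ.
by rewrite lueders_sgn_sum mxtraceZ mxtraceD [\tr (X *m P)]mxtrace_mulC; field.
Qed.

Lemma corr_jordan n (rho : 'M[C]_(2 ^ n))
    (Phi : {linear 'M[C]_(2 ^ n) -> 'M[C]_(2 ^ n)}) i1 i2 :
  corr rho Phi i1 i2 =
  2^-1 * \tr (pauli C i2 *m (Phi (pauli C i1 *m rho) + Phi (rho *m pauli C i1))).
Proof.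
have second_outcome Z s : \sum_b s * sgnb C b *
    \tr (proj (pauli C i2) b *m Z *m proj (pauli C i2) b) = s * \tr (pauli C i2 *m Z).
  by rewrite -lueders_sgn_trace mulr_sumr; apply: eq_bigr => b _; rewrite mulrA.
rewrite /corr; under eq_bigr do rewrite second_outcome.
rewrite -linearD -mxtraceZ scalemxAr -linearZ -lueders_sgn_sum.
rewrite linear_sum mulmx_sumr raddf_sum.
apply: eq_bigr => a _.
by rewrite /= [in RHS]linearZ -[in RHS]scalemxAr [in RHS]mxtraceZ.
Qed.

End Qubits.

Theorem theorem1 (C : numClosedFieldType) (n : nat) (hn : (1 <= n)%N)
  (rho1 : 'M[C]_(2 ^ n)) (Phi : {linear 'M[C]_(2 ^ n) -> 'M[C]_(2 ^ n)})
  (hrho : density rho1) (hPhi : CPTP Phi) :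
  pdm rho1 Phi =
  2^-1 *: (choi Phi *m (rho1 *t (1%:M : 'M[C]_(2 ^ n)))
           + (rho1 *t (1%:M : 'M[C]_(2 ^ n))) *m choi Phi).
Proof.
set N : C := (2 ^ n)%:R.
pose Psi : {linear 'M[C]_(2 ^ n) -> 'M[C]_(2 ^ n)} :=
  (Phi \o mulmxr rho1) \+ (Phi \o mulmx rho1).
have corr_row i1 : \sum_i2 corr rho1 Phi i1 i2 *: (pauli C i1 *t pauli C i2) =
    (2^-1 * N) *: (pauli C i1 *t Psi (pauli C i1)).
  under eq_bigr do rewrite corr_jordan -tensmxZr -scalerA.
  rewrite -tensmx_sumr -scaler_sumr (complete_family_expansion (pauli_complete n)).
  by rewrite scalerA -tensmxZr.
rewrite /pdm; under eq_bigr do rewrite corr_row.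
rewrite -scaler_sumr (choi_complete_family (pauli_complete n)).
rewrite choiD choi_comp_mulmxr choi_comp_mulmx !scalerA addrC; congr (_ *: _).
have N_neq0 : N != 0 by rewrite pnatr_eq0 expn_eq0.
have -> : (2 ^ (2 * n))%:R = N * N :> C by rewrite -natrM -expnD addnn -mul2n.
by field.
Qed.
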